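(* Let $\mathbf{F}$ be a Baire foliage tree on a topological space $X$, let $p\in X$ and $v\in\mathrm{scope}_{\mathbf{F}}(p)$. Then there is a foliage tree $\mathbf{G}$ such that: (d1) $0_{\mathbf{G}}=v$ and $\max\mathbf{G}=\mathrm{sons}_{\mathbf{G}}(0_{\mathbf{G}})$; (d2) $\mathbf{G}_v=\mathbf{F}_v\setminus\{p\}$, and $\mathbf{G}_v$ is the union of the pairwise disjoint sets $\mathbf{F}_m$, $m\in\max\mathbf{G}$; (d3) $\mathbf{G}$ is a foliage graft for $\mathbf{F}$; (d4) $\mathrm{impl}\,\mathbf{G}=\varnothing$; (d5) $\mathbf{G}$ is $\omega$-branching, locally strict, open in $X$, has bounded chains, and has height $2$.
   Context: $\omega=\{0,1,2,\dots\}$, ${}^{<\omega}\omega$ is the set of finite sequences of natural numbers. A tree is a strict partial order in which the set of predecessors of every node is well-ordered; $\mathrm{height}(x)$ is the ordinal isomorphic to the set of predecessors of $x$; the height of a tree is the least ordinal $\beta$ such that no node has height $\beta$; a branch is a maximal chain; $\mathrm{sons}(x)$ is the set of immediate successors of $x$; $\max$ is the set of maximal nodes; $0$ denotes the least node. A tree is $\omega$-branching if every non-maximal node has exactly $\omega$ many sons; it has bounded chains if every nonempty chain $C$ has a node $v$ with $c\leq v$ for all $c\in C$. A foliage tree is a pair $\mathbf{F}=(T,l)$ with $T$ a tree (skeleton) and $l$ a function on its nodes, $\mathbf{F}_x:=l(x)$; tree notions apply via the skeleton; $\mathrm{scope}_{\mathbf{F}}(p)=\{x:p\in\mathbf{F}_x\}$.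 $\mathbf{F}$ is nonincreasing if $y\geq x$ implies $\mathbf{F}_y\subseteq\mathbf{F}_x$. $\mathbf{F}$ is locally strict if each non-maximal leaf $\mathbf{F}_x$ is the disjoint union of $\mathbf{F}_s$, $s\in\mathrm{sons}(x)$; has strict branches if it has a node and for each branch $B$, $\bigcap_{x\in B}\mathbf{F}_x$ is a singleton; is open in $X$ if all leaves are open in $X$; is a foliage $\omega,\omega$-tree if its skeleton is order-isomorphic to $({}^{<\omega}\omega,\subsetneq)$. A Baire foliage tree on $X$ is an open in $X$, locally strict foliage $\omega,\omega$-tree with strict branches and $\mathbf{F}_{0_{\mathbf{F}}}=X$. A tree $\mathcal{G}$ is a graft for a tree $\mathcal{T}$ if $\mathcal{G}$ has more than one node, has a least node $0_{\mathcal{G}}$, the common nodes of $\mathcal{G}$ and $\mathcal{T}$ are exactly $\{0_{\mathcal{G}}\}\cup\max\mathcal{G}$, and for common nodes $x,y$: $x<_{\mathcal{G}}y$ iff $x<_{\mathcal{T}}y$. $\mathrm{impl}\,\mathcal{G}$ is the set of nodes of $\mathcal{G}$ other than $0_{\mathcal{G}}$ and the maximal ones. For a nonincreasing foliage tree $\mathbf{F}$, a foliage graft for $\mathbf{F}$ is a nonincreasing foliage tree $\mathbf{G}$ whose skeleton is a graft for the skeleton of $\mathbf{F}$, with $\mathbf{G}_{0_{\mathbf{G}}}\subseteq\mathbf{F}_{0_{\mathbf{G}}}$ and $\mathbf{G}_m=\mathbf{F}_m$ for all $m\in\max\mathbf{G}$. *)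

From Stdlib Require Import List.
From mathcomp Require Import all_boot.
From mathcomp Require Import boolp classical_sets topology.
Import ListNotations.

Set Implicit Arguments.
Unset Strict Implicit.
Unset Printing Implicit Defensive.

Local Open Scope classical_set_scope.

(** A foliage tree: node set (skeleton carrier) inside a universe [N] of
    possible nodes, the strict order of the skeleton, and the leaf function. *)
Record foliage (N X : Type) := Foliage {
  fnode : set N;
  flt : N -> N -> Prop;
  leaf : N -> set X
}.

Section Defs.
Context {N X : Type}.
Implicit Types F G : foliage N X.

Definition fle F x y := x = y \/ flt F x y.

Definition well_ordered (lt : N -> N -> Prop) (S : set N) : Prop :=
  (forall a b, S a -> S b -> a = b \/ lt a b \/ lt b a) /\
  (forall A : set N, A `<=` S -> A !=set0 ->
     exists m, A m /\ forall a, A a -> a <> m -> lt m a).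

Definition preds F x : set N := [set y | flt F y x].

Definition is_tree F : Prop :=
  (forall x y, flt F x y -> fnode F x /\ fnode F y) /\
  (forall x, ~ flt F x x) /\
  (forall x y z, flt F x y -> flt F y z -> flt F x z) /\
  (forall x, fnode F x -> well_ordered (flt F) (preds F x)).

Definition has_height F x (k : nat) : Prop :=
  exists s : list N, NoDup s /\ length s = k /\ (forall y, In y s <-> flt F y x).

Definition tree_height F (n : nat) : Prop :=
  (forall k, (k < n)%N -> exists x, fnode F x /\ has_height F x k) /\
  ~ (exists x, fnode F x /\ has_height F x n).

Definition least_node F r : Prop :=
  fnode F r /\ forall x, fnode F x -> x <> r -> flt F r x.

Definition sons F x : set N :=
  [set y | fnode F y /\ flt F x y /\ ~ (exists z, flt F x z /\ flt F z y)].

Definition fmax F : set N := [set x | fnode F x /\ ~ (exists y, flt F x y)].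

Definition chain F (C : set N) : Prop :=
  C `<=` fnode F /\ forall a b, C a -> C b -> a = b \/ flt F a b \/ flt F b a.

Definition branch F (B : set N) : Prop :=
  chain F B /\ forall C, chain F C -> B `<=` C -> C = B.

Definition scope F (p : X) : set N := [set x | fnode F x /\ leaf F x p].

Definition nonincreasing F : Prop :=
  forall x y, fnode F x -> fnode F y -> fle F x y -> leaf F y `<=` leaf F x.

Definition locally_strict F : Prop :=
  forall x, fnode F x -> ~ fmax F x ->
    leaf F x = \bigcup_(s in sons F x) leaf F s /\
    (forall s s', sons F x s -> sons F x s' -> s <> s' ->
       leaf F s `&` leaf F s' = set0).

Definition strict_branches F : Prop :=
  fnode F !=set0 /\
  forall B, branch F B -> exists q : X, \bigcap_(x in B) leaf F x = [set q].

Definition strict_prefix (s t : list nat) : Prop :=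
  exists u, u <> [] /\ t = s ++ u.

(** Skeleton order-isomorphic to ( ^{<omega}omega, strict inclusion ). *)
Definition omega_omega F : Prop :=
  exists f : list nat -> N,
    (forall s, fnode F (f s)) /\
    (forall x, fnode F x -> exists s, f s = x) /\
    (forall s t, f s = f t -> s = t) /\
    (forall s t, flt F (f s) (f t) <-> strict_prefix s t).

Definition omega_branching F : Prop :=
  forall x, fnode F x -> ~ fmax F x ->
    exists g : nat -> N,
      (forall n m, g n = g m -> n = m) /\
      (forall n, sons F x (g n)) /\
      (forall y, sons F x y -> exists n, g n = y).

Definition bounded_chains F : Prop :=
  forall C, chain F C -> C !=set0 ->
    exists v, fnode F v /\ forall c, C c -> fle F c v.

Definition impl F r : set N := [set x | fnode F x /\ x <> r /\ ~ fmax F x].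

Definition graft G F : Prop :=
  is_tree G /\
  (exists x y, fnode G x /\ fnode G y /\ x <> y) /\
  (exists r, least_node G r /\
     (forall x, (fnode G x /\ fnode F x) <-> (x = r \/ fmax G x))) /\
  (forall x y, fnode G x -> fnode F x -> fnode G y -> fnode F y ->
     (flt G x y <-> flt F x y)).

Definition foliage_graft G F : Prop :=
  is_tree G /\ nonincreasing G /\ graft G F /\
  (forall r, least_node G r -> leaf G r `<=` leaf F r) /\
  (forall m, fmax G m -> leaf G m = leaf F m).

End Defs.

Definition open_in {N : Type} {X : topologicalType} (F : foliage N X) : Prop :=
  forall x, fnode F x -> open (leaf F x).

Definition baire_foliage {N : Type} {X : topologicalType} (F : foliage N X) : Prop :=
  is_tree F /\ open_in F /\ locally_strict F /\ omega_omega F /\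
  strict_branches F /\
  (forall r, least_node F r -> leaf F r = setT).

(* Follow p down from v = f s0: at each code whose leaf contains p, step to the
   son whose leaf contains p.  The codes of this walk and their prefixes form a
   branch, so strictness of branches makes the leaves along the walk shrink to
   {p}.  Hence every other point of F_v leaves the walk at some step and lands
   in a son off the walk.  These offshoots are countably many, pairwise
   incomparable, have pairwise disjoint open leaves covering F_v \ {p}, and G
   is the two-level tree with root v whose maximal nodes are the offshoots. *)

From mathcomp Require Import all_boot.
From mathcomp Require Import boolp classical_sets topology.
From mathcomp Require Import zify.
From Stdlib Require Cantor List.

Set Implicit Arguments.
Unset Strict Implicit.
Unset Printing Implicit Defensive.

Local Open Scope classical_set_scope.

Lemma strict_prefix_size (s t : seq nat) :
  strict_prefix s t -> (size s < size t)%N.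
Proof. by case=> -[[]//|a u [_ ->]]; rewrite size_cat /=; lia. Qed.

Lemma strict_prefix_cat (s : seq nat) a u : strict_prefix s (s ++ a :: u).
Proof. by exists (a :: u). Qed.

Lemma cat_prefix_total (w w' u u' : seq nat) : w ++ u = w' ++ u' ->
  w = w' \/ strict_prefix w w' \/ strict_prefix w' w.
Proof.
elim: w w' => [|a w IH] [|a' w'] /=; [by left|by right; left; exists (a' :: w')|
  by right; right; exists (a :: w)|].
case=> <- /IH [->|[[x [x0 ->]]|[x [x0 ->]]]]; first by left.
- by right; left; exists x.
- by right; right; exists x.
Qed.

Definition diverge (x y : seq nat) := exists s a a' u u',
  a <> a' /\ x = s ++ a :: u /\ y = s ++ a' :: u'.

Lemma diverge_sym x y : diverge x y -> diverge y x.
Proof.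
case=> s [a [a' [u [u' [ne [-> ->]]]]]].
by exists s, a', a, u', u; split=> // /esym.
Qed.

Lemma diverge_rcons s a a' u : a <> a' -> diverge (rcons s a) (s ++ a' :: u).
Proof. by move=> ne; exists s, a, a', [::], u; rewrite cats1. Qed.

Lemma diverge_not_strict_prefix x y : diverge x y -> ~ strict_prefix x y.
Proof.
case=> s [a [a' [u [u' [ne [-> ->]]]]]] [w [_]].
rewrite -catA => /(congr1 (drop (size s))).
by rewrite !drop_size_cat //= => -[/esym/ne].
Qed.

Lemma diverge_neq x y : diverge x y -> x <> y.
Proof.
case=> s [a [a' [u [u' [ne [-> ->]]]]]].
by move/(congr1 (drop (size s))); rewrite !drop_size_cat // => -[].
Qed.

Lemma exists_exit_step (P : nat -> Prop) i :
  P 0 -> ~ P i -> exists k, P k /\ ~ P k.+1.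
Proof.
move=> P0; elim: i => [|i IH] nPi //.
by have [Pi|/IH] := pselect (P i); [exists i|].
Qed.

Section Walk.
Variables (g : seq nat -> nat) (s0 : seq nat).

Definition walk i := iter i (fun t => rcons t (g t)) s0.

Lemma walkS i : walk i.+1 = rcons (walk i) (g (walk i)).
Proof. by rewrite /walk iterS. Qed.

Lemma size_walk i : size (walk i) = (size s0 + i)%N.
Proof. by elim: i => [|i IH]; rewrite ?addn0 // walkS size_rcons IH addnS. Qed.

Lemma walk_ext i i' :
  (i < i')%N -> exists u, walk i' = walk i ++ g (walk i) :: u.
Proof.
elim: i' => // i' IH; rewrite ltnS leq_eqVlt => /predU1P[->|/IH[u e]].
  by exists [::]; rewrite walkS cats1.
by exists (rcons u (g (walk i'))); rewrite walkS e rcons_cat.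
Qed.

Lemma walk_prefix {i i'} : (i <= i')%N -> exists u, walk i' = walk i ++ u.
Proof.
rewrite leq_eqVlt => /predU1P[->|/walk_ext[u ->]]; last by eexists.
by exists [::]; rewrite cats0.
Qed.

Lemma rcons_walk_diverge i i' n n' : n <> g (walk i) -> n' <> g (walk i') ->
  (i, n) <> (i', n') -> diverge (rcons (walk i) n) (rcons (walk i') n').
Proof.
wlog le_ii' : i i' n n' / (i <= i')%N.
  move=> W ne ne' nii'; case: (leqP i i') => [|/ltnW] le; first exact: W.
  by apply/diverge_sym/W => // e; apply: nii'; case: e => -> ->.
move=> ne ne' nii'; move: le_ii'.
rewrite leq_eqVlt => /predU1P[ei|/walk_ext[u ->]].
  subst i'; rewrite -[rcons _ n']cats1; apply: diverge_rcons => en.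
  exact: nii' (congr1 (pair i) en).
by rewrite rcons_cat; exact: diverge_rcons.
Qed.

(* The offshoots are the sons of walk nodes that are not on the walk:
   [Cantor.of_nat k = (i, j)] selects the [i]-th walk node and its [j]-th son
   other than the next walk node, which [bump] skips. *)
Definition offshoot k :=
  let: (i, j) := Cantor.of_nat k in rcons (walk i) (bump (g (walk i)) j).

Lemma bump_neq h j : bump h j <> h.
Proof. by apply/eqP; rewrite eq_sym neq_bump. Qed.

Lemma offshoot_diverge k k' : k <> k' -> diverge (offshoot k) (offshoot k').
Proof.
rewrite /offshoot => nkk'.
case ek: (Cantor.of_nat k) => [i j]; case ek': (Cantor.of_nat k') => [i' j'].
apply: rcons_walk_diverge; try exact: bump_neq.
case=> ei; subst i' => /(can_inj (bumpK _)) ej; subst j'.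
apply: nkk'.
by rewrite -(Cantor.cancel_to_of k) -(Cantor.cancel_to_of k') ek ek'.
Qed.

Lemma offshoot_diverge_walk k : exists i, diverge (offshoot k) (walk i).
Proof.
rewrite /offshoot; case: (Cantor.of_nat k) => i j; exists i.+1.
by rewrite walkS -[rcons _ (g _)]cats1; apply: diverge_rcons; apply: bump_neq.
Qed.

Lemma offshoot_extends k : strict_prefix s0 (offshoot k).
Proof.
rewrite /offshoot; case: (Cantor.of_nat k) => i j.
have [u ->] := walk_prefix (leq0n i).
by rewrite rcons_cat; case: u => [|a u] /=; apply: strict_prefix_cat.
Qed.

Lemma offshoot_onto i n :
  n <> g (walk i) -> exists k, offshoot k = rcons (walk i) n.
Proof.
move=> ne; exists (Cantor.to_nat (i, unbump (g (walk i)) n)).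
by rewrite /offshoot Cantor.cancel_of_to unbumpK //; apply/eqP.
Qed.

End Walk.

Definition star {N X : Type} (r : N) (M : set N) (Lr : set X) (L : N -> set X) :
    foliage N X :=
  Foliage (r |` M) (fun x y => x = r /\ M y)
    (fun x => if pselect (x = r) then Lr else L x).

Section Star.
Context {N X : Type}.
Variables (r : N) (M : set N) (Lr : set X) (L : N -> set X).
Hypothesis Mr : ~ M r.
Hypothesis M0 : M !=set0.
Let G := star r M Lr L.

Lemma star_leaf_root : leaf G r = Lr.
Proof. by rewrite /=; case: pselect. Qed.

Lemma star_leaf m : M m -> leaf G m = L m.
Proof. by move=> Mm /=; case: pselect => // mr; rewrite mr in Mm. Qed.

Lemma star_tree : is_tree G.
Proof.
split; first by move=> x y [-> My]; split; [left|right].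
split; first by move=> x [xr Mx]; apply: Mr; rewrite -xr.
split; first by move=> x y z [_ My] [yr _]; case: Mr; rewrite -yr.
move=> x _; split; first by move=> a b [-> _] [-> _]; left.
move=> A sAp [a Aa]; exists a; split=> // b Ab; case.
by rewrite (sAp _ Ab).1 (sAp _ Aa).1.
Qed.

Lemma star_least_node : least_node G r.
Proof. by split=> [|x [->|Mx] //]; left. Qed.

Lemma star_fmax : fmax G = M.
Proof.
apply/seteqP; split=> [x [[->|//] rmax]|x Mx].
  by case: rmax; case: M0 => m Mm; exists m.
by split=> [|[y [xr _]]]; [right|apply: Mr; rewrite -xr].
Qed.

Lemma star_sons : sons G r = M.
Proof.
apply/seteqP; split=> [x [_ [[_ Mx] _]]|x Mx] //.
split; first by right.
by split=> // -[z [[_ Mz] [zr _]]]; apply: Mr; rewrite -zr.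
Qed.

Lemma star_node_not_max {x} : fnode G x -> ~ fmax G x -> x = r.
Proof. by rewrite star_fmax => -[//|Mx] /(_ Mx). Qed.

Lemma star_impl : impl G r = set0.
Proof. by apply/seteqP; split=> // x [Gx [xr /(star_node_not_max Gx)/xr]]. Qed.

Lemma star_bounded_chains : bounded_chains G.
Proof.
move=> C [CG Ccmp] _.
have [[w [Cw wr]]|Cr] := pselect (exists w, C w /\ w <> r).
  exists w; split=> [|c Cc]; first exact: CG.
  by case: (Ccmp _ _ Cc Cw) => [->|[lt|[wr' _]]]; [left|right|].
exists r; split=> [|c Cc]; first by left.
by left; apply: contrapT => cr; apply: Cr; exists c.
Qed.

Lemma star_tree_height : tree_height G 2.
Proof.
have [m Mm] := M0.
split=> [[|[|//]] _|].
- exists r; split; first by left.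
  exists [::]; split; first exact: List.NoDup_nil.
  by split=> // y; split=> // -[_ /Mr].
- exists m; split; first by right.
  exists [:: r]; split; first by constructor; [case|constructor].
  by split=> // y; split=> [[<-|[]]|[-> _]]; [|left].
case=> x [_ [[|a [|b [|? ?]]] [nd [//= _ sP]]]].
have [ar _] := (sP a).1 (or_introl erefl).
have [br _] := (sP b).1 (or_intror (or_introl erefl)).
by move/List.NoDup_cons_iff: nd => [/= + _]; rewrite ar br; apply; left.
Qed.

Lemma star_locally_strict :
  Lr = \bigcup_(m in M) L m ->
  (forall m m', M m -> M m' -> m <> m' -> L m `&` L m' = set0) ->
  locally_strict G.
Proof.
move=> Lr_cover Ldisj x Gx /(star_node_not_max Gx) ->.
rewrite star_sons star_leaf_root Lr_cover; split.
  by apply: eq_bigcupr => m Mm; rewrite star_leaf.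
by move=> m m' Mm Mm'; rewrite !star_leaf //; exact: Ldisj.
Qed.

Lemma star_omega_branching (g : nat -> N) :
  injective g -> M = range g -> omega_branching G.
Proof.
move=> g_inj Mg x Gx /(star_node_not_max Gx) ->; exists g.
rewrite star_sons Mg; split=> //.
by split=> [n|y [n _ <-]]; exists n.
Qed.

End Star.

Lemma star_open_in {N : Type} {X : topologicalType} (r : N) (M : set N)
    (Lr : set X) (L : N -> set X) :
  ~ M r -> open Lr -> (forall m, M m -> open (L m)) -> open_in (star r M Lr L).
Proof.
move=> Mr oLr oL x [->|Mx]; first by rewrite star_leaf_root.
by rewrite star_leaf //; exact: oL.
Qed.

Lemma star_foliage_graft {N X : Type} (F : foliage N X) (r : N) (M : set N)
    (Lr : set X) :
  is_tree F -> fnode F r -> M `<=` fnode F -> M !=set0 ->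
  (forall m, M m -> flt F r m) -> (forall m m', M m -> M m' -> ~ flt F m m') ->
  Lr `<=` leaf F r -> (forall m, M m -> leaf F m `<=` Lr) ->
  foliage_graft (star r M Lr (leaf F)) F.
Proof.
move=> [_ [Firr [Ftrans _]]] Fr MF [m Mm] rM Manti LrF MLr.
have Mr : ~ M r by move=> /rM /Firr.
have M0 : M !=set0 by exists m.
have G_tree := star_tree Lr (leaf F) Mr.
split=> //; split.
  move=> x y _ _ [<-|[-> My]] //.
  by rewrite star_leaf_root star_leaf //; apply: MLr.
split.
  split=> //; split.
    exists r, m; split; first by left.
    by split=> [|rm]; [right|apply: Mr; rewrite rm].
  split.
    exists r; split; first exact: star_least_node.
    move=> x; rewrite star_fmax //; split=> [[[->|Mx] _]|[->|Mx]].
    - by left.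
    - by right.
    - by split=> //; left.
    - by split; [right|exact: MF].
  move=> x y [->|Mx] _ [->|My] _ /=.
  - by split=> [[_ /Mr]|/Firr].
  - by split=> [[_ /rM]|].
  - split=> [[_ /Mr] //|xr]; case: (Firr x); exact: Ftrans xr (rM _ Mx).
  - by split=> [[xr _]|/(Manti _ _ Mx My)] //; case: Mr; rewrite -xr.
split.
  move=> r' [_ r'min]; have [->|r'r] := pselect (r' = r).
    by rewrite star_leaf_root.
  by case: (r'min r (or_introl erefl) (nesym r'r)) => _ /Mr.
by move=> m'; rewrite star_fmax // => Mm'; rewrite star_leaf.
Qed.

Section CodedTree.
Context {N X : Type} (F : foliage N X) (f : seq nat -> N).
Hypothesis F_tree : is_tree F.
Hypothesis F_ls : locally_strict F.
Hypothesis f_node : forall s, fnode F (f s).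
Hypothesis f_onto : forall x, fnode F x -> exists s, f s = x.
Hypothesis f_inj : injective f.
Hypothesis f_lt : forall s t, flt F (f s) (f t) <-> strict_prefix s t.

Lemma sons_code s y : sons F (f s) y <-> exists n, y = f (rcons s n).
Proof.
split=> [[/f_onto [t <-] [/f_lt [u [u0 ->]] no_mid]]|[n ->]].
  case: u u0 no_mid => [//|a [|b u]] _ no_mid; first by exists a; rewrite cats1.
  case: no_mid; exists (f (rcons s a)); rewrite !f_lt -cats1.
  by split; [exists [:: a]|exists (b :: u); rewrite -catA].
split=> //; split; first by apply/f_lt; exists [:: n]; rewrite cats1.
case=> z [lt_z z_lt]; have [t zt] := f_onto ((proj1 F_tree) _ _ z_lt).1.
move: lt_z z_lt; rewrite -zt.
move=> /f_lt/strict_prefix_size + /f_lt/strict_prefix_size.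
by rewrite size_rcons; lia.
Qed.

Lemma code_not_max s : ~ fmax F (f s).
Proof.
case=> _; apply; exists (f (rcons s 0)).
by apply/f_lt; exists [:: 0]; rewrite cats1.
Qed.

Lemma leaf_code_cover s : leaf F (f s) = \bigcup_n leaf F (f (rcons s n)).
Proof.
have [-> _] := F_ls (f_node s) (@code_not_max s).
apply/seteqP; split=> [y [_ /sons_code [n ->] ?]|y [n _ ?]]; first by exists n.
by exists (f (rcons s n)) => //; apply/sons_code; exists n.
Qed.

Lemma leaf_code_disjoint s n n' : n <> n' ->
  leaf F (f (rcons s n)) `&` leaf F (f (rcons s n')) = set0.
Proof.
move=> nn'; have [_ -> //] := F_ls (f_node s) (@code_not_max s).
- by apply/sons_code; exists n.
- by apply/sons_code; exists n'.
- move/f_inj/(congr1 (drop (size s))).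
  by rewrite -!cats1 !drop_size_cat // => -[].
Qed.

Lemma leaf_code_cat s u : leaf F (f (s ++ u)) `<=` leaf F (f s).
Proof.
elim/last_ind: u => [|u a IH]; first by rewrite cats0.
by rewrite -rcons_cat => y ya; apply: IH; rewrite leaf_code_cover; exists a.
Qed.

Lemma leaf_code_diverge x y :
  diverge x y -> leaf F (f x) `&` leaf F (f y) = set0.
Proof.
case=> s [a [a' [u [u' [aa' [-> ->]]]]]]; apply/seteqP; split=> // z.
rewrite -!cat_rcons => -[/leaf_code_cat za /leaf_code_cat za'].
by rewrite -(leaf_code_disjoint s aa').
Qed.

Definition walk_prefixes g s0 :=
  [set f w | w in [set w | exists i u, walk g s0 i = w ++ u]].

Lemma walk_prefixes_branch g s0 : branch F (walk_prefixes g s0).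
Proof.
set B := walk_prefixes g s0.
have B_chain : chain F B.
  split=> [_ [w _ <-] //|_ _ [w [i [u ei]] <-] [w' [i' [u' ei']] <-]].
  have [v ev] := walk_prefix g s0 (leq_maxl i i').
  have [v' ev'] := walk_prefix g s0 (leq_maxr i i').
  have : w ++ (u ++ v) = w' ++ (u' ++ v') by rewrite !catA -ei -ei' -ev -ev'.
  case/cat_prefix_total => [->|[/f_lt|/f_lt]]; first by left.
    by right; left.
  by right; right.
split=> // C [CF Ccmp] BC; apply/seteqP; split=> // c Cc.
have [w ew] := f_onto (CF _ Cc); subst c.
have Bw : B (f (walk g s0 (size w))).
  by exists (walk g s0 (size w)) => //; exists (size w), [::]; rewrite cats0.
case: (Ccmp _ _ Cc (BC _ Bw)) => [/f_inj ->|[/f_lt [u [_ e]]|]] //.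
- by exists w => //; exists (size w), u.
- by move/f_lt/strict_prefix_size; rewrite size_walk; lia.
Qed.

Lemma offshoot_lt g s0 k : flt F (f s0) (f (offshoot g s0 k)).
Proof. exact/f_lt/offshoot_extends. Qed.

Lemma offshoot_antichain g s0 k k' :
  ~ flt F (f (offshoot g s0 k)) (f (offshoot g s0 k')).
Proof.
have [<-|kk'] := pselect (k = k'); first exact: (proj1 (proj2 F_tree)).
by move/f_lt; apply/diverge_not_strict_prefix/offshoot_diverge.
Qed.

Lemma offshoot_inj g s0 : injective (f \o offshoot g s0).
Proof.
move=> k k' /f_inj e; apply: contrapT => kk'.
exact: diverge_neq (offshoot_diverge g s0 kk') e.
Qed.

Lemma leaf_offshoot_disjoint g s0 k k' : k <> k' ->
  leaf F (f (offshoot g s0 k)) `&` leaf F (f (offshoot g s0 k')) = set0.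
Proof. by move=> kk'; apply/leaf_code_diverge/offshoot_diverge. Qed.

Section Toward.
Variables (s0 : seq nat) (p : X).
Hypothesis p_s0 : leaf F (f s0) p.

Definition next_toward t := xget 0 [set n | leaf F (f (rcons t n)) p].

Lemma leaf_next_toward t :
  leaf F (f t) p -> leaf F (f (rcons t (next_toward t))) p.
Proof.
rewrite leaf_code_cover => -[n _ pn].
by apply: (@xgetPex _ 0 [set n | leaf F (f (rcons t n)) p]); exists n.
Qed.

Lemma leaf_walk_toward i : leaf F (f (walk next_toward s0 i)) p.
Proof. by elim: i => [|i IH] //; rewrite walkS; apply: leaf_next_toward. Qed.

Hypothesis F_sb : strict_branches F.

Lemma bigcap_walk_toward :
  \bigcap_(x in walk_prefixes next_toward s0) leaf F x = [set p].
Proof.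
have [q Bq] := F_sb.2 _ (walk_prefixes_branch next_toward s0).
rewrite Bq; congr [set _]; suff : [set q] p by move=> ->.
rewrite -Bq => _ [w [i [u e]] <-]; apply: (@leaf_code_cat w u p).
by rewrite -e; apply: leaf_walk_toward.
Qed.

Lemma leaf_offshoot_cover :
  leaf F (f s0) `\ p = \bigcup_k leaf F (f (offshoot next_toward s0 k)).
Proof.
apply/seteqP; split=> [y [ys0 yp]|y [k _ yk]].
  have [i yi] : exists i, ~ leaf F (f (walk next_toward s0 i)) y.
    apply: contrapT => y_walk; apply: yp; rewrite -bigcap_walk_toward.
    move=> _ [w [i [u e]] <-]; apply: (@leaf_code_cat w u y); rewrite -e.
    by apply: contrapT => yi; apply: y_walk; exists i.
  have [k [+ nyk]] := exists_exit_step
    (P := fun i => leaf F (f (walk next_toward s0 i)) y) ys0 yi.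
  rewrite leaf_code_cover => -[n _ yn].
  have n_off : n <> next_toward (walk next_toward s0 k).
    by move=> en; apply: nyk; rewrite walkS -en.
  by have [k' ek'] := offshoot_onto n_off; exists k'; rewrite // ek'.
split; first by have [u [_ e]] := offshoot_extends next_toward s0 k;
  apply: (@leaf_code_cat s0 u y); rewrite -e.
move=> /= yp; have [i d] := offshoot_diverge_walk next_toward s0 k.
have /seteqP[sub _] := leaf_code_diverge d; apply: (sub y); split=> //.
by rewrite yp; apply: leaf_walk_toward.
Qed.

End Toward.

End CodedTree.

Theorem lemma18 (N : Type) (X : topologicalType) (F : foliage N X)
  (p : X) (v : N) :
  baire_foliage F -> scope F p v ->
  exists G : foliage N X,
    is_tree G /\
    (* (d1) *)
    (least_node G v /\ fmax G = sons G v) /\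
    (* (d2) *)
    (leaf G v = leaf F v `\ p /\
     leaf G v = \bigcup_(m in fmax G) leaf F m /\
     (forall m m', fmax G m -> fmax G m' -> m <> m' ->
        leaf F m `&` leaf F m' = set0)) /\
    (* (d3) *)
    foliage_graft G F /\
    (* (d4) *)
    impl G v = set0 /\
    (* (d5) *)
    (omega_branching G /\ locally_strict G /\ open_in G /\
     bounded_chains G /\ tree_height G 2).
Proof.
move=> [F_tree [F_open [F_ls [[f [f_node [f_onto [f_inj f_lt]]]] [F_sb _]]]]].
move=> [/f_onto [s0 <-] p_s0].
pose M := range (f \o offshoot (next_toward F f p) s0).
have M_gt m : M m -> flt F (f s0) m by case=> k _ <-; apply: offshoot_lt.
have Mr : ~ M (f s0) by move/M_gt; apply: (proj1 (proj2 F_tree)).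
have M0 : M !=set0 by exists (f (offshoot (next_toward F f p) s0 0)), 0.
have M_cover : leaf F (f s0) `\ p = \bigcup_(m in M) leaf F m.
  by rewrite bigcup_image; apply: leaf_offshoot_cover.
have M_disj m m' : M m -> M m' -> m <> m' -> leaf F m `&` leaf F m' = set0.
  case=> k _ <- [k' _ <-] mm'; apply: leaf_offshoot_disjoint => // kk'.
  by apply: mm'; rewrite kk'.
have M_open m : M m -> open (leaf F m).
  by case=> k _ <-; apply: F_open (f_node _).
exists (star (f s0) M (leaf F (f s0) `\ p) (leaf F)).
rewrite star_fmax // star_sons // star_leaf_root star_impl //.
split; first exact: star_tree.
split; first by split=> //; apply: star_least_node.
split; first by do 2!split=> //.
split.
  apply: star_foliage_graft => //; first by move=> _ [k _ <-]; apply: f_node.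
  - by move=> _ _ [k _ <-] [k' _ <-]; apply: offshoot_antichain.
  - by move=> m Mm; rewrite M_cover; apply: bigcup_sup.
split=> //; split.
  exact: (star_omega_branching (L := leaf F) Mr M0
    (@offshoot_inj _ _ f_inj _ _) erefl).
split; first exact: star_locally_strict.
split; first by apply: star_open_in; rewrite // M_cover; apply: bigcup_open.
split; [exact: star_bounded_chains|exact: star_tree_height].
Qed.
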